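(* There exist unit vectors $\psi_1, \psi_2, \psi_3, \psi_4 \in \mathbb{C}^4$ such that $|\langle \psi_i, \psi_j\rangle| \le \tfrac{2}{3}$ for all $i \ne j$, and yet the set $\{\psi_1\psi_1^*, \psi_2\psi_2^*, \psi_3\psi_3^*, \psi_4\psi_4^*\}$ of rank-one density matrices is not antidistinguishable. Consequently, the statement ''for every $d\ge 2$, any $d$ unit vectors in $\mathbb{C}^d$ with pairwise inner products of absolute value at most $(d-2)/(d-1)$ form an antidistinguishable set'' is false (it fails for $d=4$).
   Context: A density matrix on $\mathbb{C}^d$ is a positive semidefinite $d\times d$ complex matrix of trace $1$. A set of density matrices $\{\rho_1,\ldots,\rho_n\}$ on $\mathbb{C}^d$ is called antidistinguishable if there exist positive semidefinite $d\times d$ matrices $N_1,\ldots,N_n$ with $\sum_{i=1}^n N_i = I$ (the identity) and $\operatorname{Tr}(N_i \rho_i) = 0$ for every $i \in \{1,\ldots,n\}$. For a unit vector $\psi$, $\psi\psi^*$ denotes the rank-one projection onto $\psi$, and $\langle \cdot,\cdot\rangle$ is the standard inner product on $\mathbb{C}^4$. *)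

From HB Require Import structures.
From mathcomp Require Import all_boot all_order all_algebra.
From mathcomp Require Import complex.
From mathcomp Require Import Rstruct.
Set Implicit Arguments. Unset Strict Implicit. Unset Printing Implicit Defensive.
Import Order.TTheory GRing.Theory Num.Theory.
Local Open Scope ring_scope.

(* The complex numbers: R[i] over Stdlib's real numbers R (a realType,
   hence a real closed field, so R[i] is a numClosedFieldType). *)
Notation Cplx := (Rdefinitions.R[i]).

Definition mxH (C : numClosedFieldType) m n (A : 'M[C]_(m, n)) : 'M[C]_(n, m) :=
  (map_mx Num.conj A)^T.

Definition psd (C : numClosedFieldType) d (A : 'M[C]_d) : Prop :=
  mxH A = A /\ forall v : 'cV[C]_d, 0 <= (mxH v *m A *m v) 0 0.

Definition density (C : numClosedFieldType) d (A : 'M[C]_d) : Prop :=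
  psd A /\ \tr A = 1.

Definition inner (C : numClosedFieldType) d (u v : 'cV[C]_d) : C :=
  \sum_k Num.conj (u k 0) * v k 0.

Definition proj (C : numClosedFieldType) d (psi : 'cV[C]_d) : 'M[C]_d :=
  psi *m mxH psi.

Definition antidistinguishable (C : numClosedFieldType) n d
    (rho : 'I_n -> 'M[C]_d) : Prop :=
  exists N : 'I_n -> 'M[C]_d,
    (forall i, psd (N i)) /\ \sum_(i < n) N i = 1%:M /\
    (forall i, \tr (N i *m rho i) = 0).

(** The four states [psi k] are the orbit of one real vector [amp] under the
    diagonal unitary [diag(1, i, -1, -i)], so their Gram matrix is circulant
    with entries the discrete Fourier transform of the squared amplitudes of
    [amp]; these have modulus at most 2/3.  Every [psi k psi k^*] is the same
    diagonal matrix [Y] of positive trace plus a nonnegative combination of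
    rank-one projections, so if [N_1, ..., N_4] antidistinguished the states,
    then [tr Y = sum_k tr (N_k Y) <= sum_k tr (N_k psi_k psi_k^* ) = 0]. *)

From HB Require Import structures.
From mathcomp Require Import all_boot all_order all_algebra.
From mathcomp Require Import complex Rstruct.
From mathcomp Require Import ring zify.
Set Implicit Arguments. Unset Strict Implicit. Unset Printing Implicit Defensive.
Import Order.TTheory GRing.Theory Num.Theory.
Local Open Scope ring_scope.

Lemma tr_mul_proj_ge0 (C : numClosedFieldType) d (N : 'M[C]_d) (w : 'cV[C]_d) :
  psd N -> 0 <= \tr (N *m proj w).
Proof.
case=> _ N_ge0; rewrite /proj mulmxA mxtrace_mulC mulmxA /mxtrace big_ord1.
exact: N_ge0.
Qed.

Lemma not_antidistinguishable_cone (C : numClosedFieldType) n d m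
    (rho : 'I_n -> 'M[C]_d) (Y : 'M[C]_d) (c : 'I_m -> C)
    (w : 'I_n -> 'I_m -> 'cV[C]_d) :
  0 < \tr Y -> (forall k, 0 <= c k) ->
  (forall i, rho i = Y + \sum_k c k *: proj (w i k)) ->
  ~ antidistinguishable rho.
Proof.
move=> trY_gt0 c_ge0 rhoE [N [N_psd [N_sum N_rho]]].
have trNY_le i : \tr (N i *m Y) <= \tr (N i *m rho i).
  rewrite rhoE mulmxDr mxtraceD lerDl mulmx_sumr raddf_sum /=.
  apply: sumr_ge0 => k _; rewrite -scalemxAr mxtraceZ.
  by rewrite mulr_ge0 ?c_ge0 ?tr_mul_proj_ge0.
suff /(lt_le_trans trY_gt0) : \tr Y <= 0 by rewrite ltxx.
rewrite -[Y]mul1mx -N_sum mulmx_suml raddf_sum /=.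
by apply: le_trans (ler_sum _ (fun i _ => trNY_le i)) _; rewrite big1.
Qed.

Section Counterexample.

Variable C : numClosedFieldType.

Lemma conjC_iX n : ('i ^+ n : C)^* = 'i ^+ (3 * n).
Proof. by rewrite rmorphXn /= conjCi exprM exprSr sqrCi mulN1r. Qed.

Lemma exprCi_4n n : ('i ^+ (4 * n) : C) = 1.
Proof. by rewrite exprM (_ : 4 = 2 * 2)%N // exprM sqrCi sqrrN !expr1n. Qed.

Lemma exprCi_modn n : ('i ^+ n : C) = 'i ^+ (n %% 4).
Proof. by rewrite {1}(divn_eq n 4) exprD mulnC exprCi_4n mul1r. Qed.

(* Normal form of ['i ^+ n]; rewriting with [exprCi_modn] instead would loop. *)
Definition powCi (r : nat) : C :=
  match r with 0 => 1 | 1 => 'i | 2 => -1 | _ => - 'i end.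

Lemma exprCiE n : ('i ^+ n : C) = powCi (n %% 4).
Proof.
rewrite exprCi_modn; have : (n %% 4 < 4)%N by rewrite ltn_mod.
case: (n %% 4)%N => [|[|[|[|r]]]] //= _; rewrite ?expr0 ?expr1 //.
- by rewrite sqrCi.
- by rewrite exprS sqrCi mulrN1.
Qed.

Definition phased (k : nat) (x : nat -> C) : 'cV[C]_4 :=
  \col_(j < 4) ('i ^+ (j * k) * x j).

Section PhasedVectors.

Variable x : nat -> C.
Hypothesis x_real : forall j, x j \is Num.real.

Lemma inner_phased k l :
  inner (phased k x) (phased l x) = \sum_(j < 4) 'i ^+ (j * (3 * k + l)) * x j ^+ 2.
Proof.
apply: eq_bigr => j _; rewrite !mxE rmorphM /= conjC_iX conj_Creal //.
by rewrite (_ : (j * (3 * k + l) = 3 * (j * k) + j * l)%N) 1?exprD; [ring | lia].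
Qed.

Lemma proj_phasedE k (a b : 'I_4) :
  proj (phased k x) a b = 'i ^+ (a * k) * 'i ^+ (3 * (b * k)) * (x a * x b).
Proof.
by rewrite /proj !mxE big_ord1 !mxE rmorphM /= conjC_iX conj_Creal //; ring.
Qed.

End PhasedVectors.

Definition amp (j : nat) : C :=
  match j with 0 => 22%:R / 27%:R | 2 => 7%:R / 27%:R | 3 => 14%:R / 27%:R | _ => 0 end.

Definition psi (k : 'I_4) : 'cV[C]_4 := phased k amp.

Lemma amp_real j : amp j \is Num.real.
Proof. by case: j => [|[|[|[|j]]]]; rewrite /= ?rpredM ?rpredV ?realn ?real0. Qed.

Definition fourier (m : nat) : C := \sum_(j < 4) 'i ^+ (j * m) * amp j ^+ 2.

Lemma inner_psi (k l : 'I_4) : inner (psi k) (psi l) = fourier ((3 * k + l) %% 4).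
Proof.
rewrite inner_phased; last exact: amp_real.
by apply: eq_bigr => j _; rewrite exprCi_modn [in RHS]exprCi_modn modnMmr.
Qed.

Lemma fourier0 : fourier 0 = 1.
Proof. by rewrite /fourier !big_ord_recr big_ord0 /= !exprCiE /=; field. Qed.

Lemma norm_fourier_le m : (0 < m < 4)%N -> `|fourier m| <= 2%:R / 3%:R.
Proof.
have rect_le (a b : C) : a \is Num.real -> b \is Num.real ->
    0 <= 4%:R / 9%:R - (a ^+ 2 + b ^+ 2) -> `|a + 'i * b| <= 2%:R / 3%:R.
  move=> a_real b_real; rewrite subr_ge0 => le_ab.
  rewrite -ler_sqr ?nnegrE ?divr_ge0 ?ler0n // normC2_rect //.
  by rewrite (_ : (2%:R / 3%:R) ^+ 2 = 4%:R / 9%:R :> C) //; field.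
have ratio_ge0 p : 0 <= p%:R / 27%:R ^+ 4 :> C by rewrite divr_ge0 ?exprn_ge0 ?ler0n.
have fourierE : fourier m = \sum_(j < 4) powCi ((j * m) %% 4) * amp j ^+ 2.
  by apply: eq_bigr => j _; rewrite exprCiE.
case: m fourierE => [|[|[|[|m]]]] //=; rewrite !big_ord_recr big_ord0 /= => -> _.
- rewrite (_ : _ + _ = 435%:R / 729%:R + 'i * - (196%:R / 729%:R)); last by field.
  apply: rect_le; rewrite ?rpredN ?rpredM ?rpredV ?realn //.
  by rewrite (_ : _ - _ = (5 * 29 * 59)%:R / 27%:R ^+ 4) ?ratio_ge0 //; field.
- rewrite (_ : _ + _ = 337%:R / 729%:R + 'i * 0); last by field.
  apply: rect_le; rewrite ?real0 ?rpredM ?rpredV ?realn //.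
  by rewrite (_ : _ - _ = (149 * 823)%:R / 27%:R ^+ 4) ?ratio_ge0 //; field.
- rewrite (_ : _ + _ = 435%:R / 729%:R + 'i * (196%:R / 729%:R)); last by field.
  apply: rect_le; rewrite ?rpredM ?rpredV ?realn //.
  by rewrite (_ : _ - _ = (5 * 29 * 59)%:R / 27%:R ^+ 4) ?ratio_ge0 //; field.
Qed.

Lemma inner_psi_diag k : inner (psi k) (psi k) = 1.
Proof. by rewrite inner_psi (_ : (3 * k + k = k * 4)%N) ?modnMl ?fourier0 //; lia. Qed.

Lemma norm_inner_psi_le (k l : 'I_4) :
  k != l -> `|inner (psi k) (psi l)| <= 2%:R / 3%:R.
Proof.
move=> neq_kl; rewrite inner_psi norm_fourier_le //.
by case: k neq_kl => [[|[|[|[|k]]]] ?] //; case: l => [[|[|[|[|l]]]] ?].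
Qed.

(* [amp amp^T] minus a nonnegative combination of [dir 0 dir 0^T] and
   [dir 1 dir 1^T] is diagonal, with trace 1/729. *)
Definition dir (m j : nat) : C :=
  match m, j with
  | 0, 0 => 3%:R | 0, 2 => 1 | 0, 3 => 2%:R | 1, 2 => 1 | 1, 3 => -1 | _, _ => 0
  end.

Definition weight (m : nat) : C :=
  match m with 0 => 154%:R / 2187%:R | _ => 14%:R / 2187%:R end.

Definition residue (j : nat) : C :=
  match j with
  | 0 => 22%:R / 729%:R | 2 => - (7%:R / 729%:R) | 3 => - (14%:R / 729%:R) | _ => 0
  end.

Lemma dir_real m j : dir m j \is Num.real.
Proof.
by case: m => [|[|m]]; case: j => [|[|[|[|j]]]]; rewrite /= ?rpredN ?realn ?real0 ?real1.
Qed.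

Lemma amp_outer_split (a b : 'I_4) :
  amp a * amp b = (residue a) *+ (a == b)
                  + \sum_(m < 2) weight m * (dir m a * dir m b).
Proof.
rewrite big_ord_recr big_ord1 /=.
by case: a => [[|[|[|[|a]]]] ?] //; case: b => [[|[|[|[|b]]]] ?] //=;
  rewrite ?mulr0n ?mulr1n ?mul0r ?mulr0 ?add0r ?addr0; field.
Qed.

Lemma proj_psi_split k :
  proj (psi k) = diag_mx (\row_(j < 4) residue j)
                 + \sum_(m < 2) weight m *: proj (phased k (dir m)).
Proof.
apply/matrixP => a b.
rewrite /psi proj_phasedE; last exact: amp_real.
rewrite !mxE summxE amp_outer_split mulrDr mulr_sumr.
congr (_ + _); last first.
  by apply: eq_bigr => m _; rewrite mxE proj_phasedE; [ring | exact: dir_real].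
have [<-|_] := eqVneq a b; last by rewrite !mulr0n mulr0.
rewrite -exprD (_ : (a * k + 3 * (a * k) = 4 * (a * k))%N); last by lia.
by rewrite exprCi_4n mul1r.
Qed.

Lemma tr_residue_gt0 : 0 < \tr (diag_mx (\row_(j < 4) residue j)).
Proof.
rewrite mxtrace_diag !big_ord_recr big_ord0 /= !mxE /=.
by rewrite (_ : _ + _ = 1 / 729%:R) ?divr_gt0 ?ltr0n //; field.
Qed.

Lemma not_antidistinguishable_psi : ~ antidistinguishable (fun k => proj (psi k)).
Proof.
apply: (not_antidistinguishable_cone tr_residue_gt0 (c := fun m : 'I_2 => weight m)).
- by case=> [[|[|m]] ?]; rewrite divr_ge0 ?ler0n.
- exact: proj_psi_split.
Qed.

End Counterexample.

Theorem mainTheorem2 :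
  (exists psi : 'I_4 -> 'cV[Cplx]_4,
      (forall i, inner (psi i) (psi i) = 1) /\
      (forall i j, i != j -> `|inner (psi i) (psi j)| <= 2%:R / 3%:R) /\
      ~ antidistinguishable (fun i => proj (psi i)))
  /\
  ~ (forall d : nat, (2 <= d)%N ->
       forall psi : 'I_d -> 'cV[Cplx]_d,
         (forall i, inner (psi i) (psi i) = 1) ->
         (forall i j, i != j ->
            `|inner (psi i) (psi j)| <= (d - 2)%:R / (d - 1)%:R) ->
         antidistinguishable (fun i => proj (psi i))).
Proof.
have psi_unit := @inner_psi_diag Cplx.
have psi_far := @norm_inner_psi_le Cplx.
have psi_not_ad := @not_antidistinguishable_psi Cplx.
split; first by exists (@psi Cplx).
move=> conjecture; apply: psi_not_ad.
exact: conjecture 4%N isT _ psi_unit psi_far.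
Qed.
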